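(* Let $M$ be a combinatorial $3$-pseudomanifold with vertex set $V=V_1\dot\cup V_2$, let $S_{(V_1,V_2)}$ be the associated slicing, let $Q$ be a quadrilateral of $S_{(V_1,V_2)}$, and let $x\in V_1$, $a\in V_2$. Then $Q$ shares at most one edge with the trace $C^x$ and at most one edge with the trace $C_a$.
   Context: A combinatorial $3$-pseudomanifold is a finite pure $3$-dimensional simplicial complex in which the link of every vertex is a combinatorial surface. A function $f:M\to\mathbb{R}$ is regular simplexwise linear (rsl) if it is linear on every simplex and takes pairwise distinct values on the vertices. Given a partition $V=V_1\dot\cup V_2$ of the vertex set into nonempty sets, choose an rsl-function $f$ with $f(v)<f(w)$ for all $v\in V_1$, $w\in V_2$ and $x_0$ strictly between $\max f(V_1)$ and $\min f(V_2)$; the slicing $S_{(V_1,V_2)}$ is the polyhedral complex $f^{-1}(x_0)$ (made of triangles and quadrilaterals). Each vertex of $S_{(V_1,V_2)}$ is the intersection point of $f^{-1}(x_0)$ with an edge $\langle u,w\rangle$ of $M$ with $u\in V_1$, $w\in V_2$, and is denoted $\binom{u}{w}$. For $x\in V_1$ define $C^x_2$ as the set of faces of $S_{(V_1,V_2)}$ of the form $\langle\binom{x}{a},\binom{x}{b},\binom{x}{c}\rangle$ with $a,b,c\in V_2$, and $C^x_1$ as the set of faces of $S_{(V_1,V_2)}$ not in $C^x_2$ of the form $\langle\binom{x}{a},\binom{x}{b}\rangle$ with $a,b\in V_2$; the trace of $x$ is $C^x:=\overline{C^x_2\cup C^x_1}$ (the subcomplex generated). Analogously, for $a\in V_2$,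 the trace $C_a$ is the closure of the set of triangles $\langle\binom{x}{a},\binom{y}{a},\binom{z}{a}\rangle$ and edges $\langle\binom{x}{a},\binom{y}{a}\rangle$ ($x,y,z\in V_1$) of $S_{(V_1,V_2)}$. *)

From mathcomp Require Import all_boot.
Set Implicit Arguments. Unset Strict Implicit. Unset Printing Implicit Defensive.

Section Defs.
Variable V : finType.

Definition simplicial_complex (K : {set {set V}}) : Prop :=
  set0 \notin K /\
  forall s t : {set V}, s \in K -> t \subset s -> t != set0 -> t \in K.

Definition pure_dim (d : nat) (K : {set {set V}}) : Prop :=
  (exists s, s \in K) /\
  (forall s, s \in K -> #|s| <= d.+1) /\
  (forall s, s \in K -> exists2 t, t \in K & (s \subset t) /\ #|t| = d.+1).

Definition link (K : {set {set V}}) (v : V) : {set {set V}} :=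
  [set t in K | (v \notin t) && (v |: t \in K)].

Definition cycle_complex (L : {set {set V}}) : Prop :=
  simplicial_complex L /\ pure_dim 1 L /\
  (forall u, [set u] \in L -> #|[set e in L | (#|e| == 2) && (u \in e)]| = 2) /\
  (forall u w, [set u] \in L -> [set w] \in L ->
     connect (fun p q : V => [set p; q] \in L) u w).

Definition comb_surface (K : {set {set V}}) : Prop :=
  simplicial_complex K /\ pure_dim 2 K /\
  (forall w, [set w] \in K -> cycle_complex (link K w)).

Definition comb_3_pseudomanifold (M : {set {set V}}) : Prop :=
  simplicial_complex M /\ pure_dim 3 M /\
  (forall v : V, [set v] \in M) /\
  (forall v : V, comb_surface (link M v)).

(** Slicing S_(V1,V2), with V2 = ~: V1.  The vertex (u,w) : V * V stands for
    binom(u,w), the point where f^{-1}(x0) meets the edge <u,w>.  The cell of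
    the slicing cut out of a simplex s of M meeting both V1 and V2 is
    identified with its vertex set. *)
Definition mixed (V1 : {set V}) (s : {set V}) : bool :=
  (s :&: V1 != set0) && (s :\: V1 != set0).

Definition cell (V1 : {set V}) (s : {set V}) : {set V * V} :=
  [set p : V * V | (p.1 \in s :&: V1) && (p.2 \in s :\: V1)].

Definition slicing (M : {set {set V}}) (V1 : {set V}) : {set {set V * V}} :=
  [set cell V1 s | s in [set s in M | mixed V1 s]].

(** Faces of the slicing are vertices (1 point), edges (2 points),
    triangles (3 points) and quadrilaterals (4 points). *)

Definition Cx2 M V1 (x : V) : {set {set V * V}} :=
  [set F in slicing M V1 | (#|F| == 3) && [forall p in F, p.1 == x]].
Definition Cx1 M V1 (x : V) : {set {set V * V}} :=
  [set F in slicing M V1 | (F \notin Cx2 M V1 x) && (#|F| == 2) &&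
                           [forall p in F, p.1 == x]].
Definition trace_up M V1 (x : V) : {set {set V * V}} :=
  [set G in slicing M V1 | [exists F in Cx2 M V1 x :|: Cx1 M V1 x, G \subset F]].

Definition Ca2 M V1 (a : V) : {set {set V * V}} :=
  [set F in slicing M V1 | (#|F| == 3) && [forall p in F, p.2 == a]].
Definition Ca1 M V1 (a : V) : {set {set V * V}} :=
  [set F in slicing M V1 | (#|F| == 2) && [forall p in F, p.2 == a]].
Definition trace_down M V1 (a : V) : {set {set V * V}} :=
  [set G in slicing M V1 | [exists F in Ca2 M V1 a :|: Ca1 M V1 a, G \subset F]].

Definition shared_edges M V1 (Q : {set V * V}) (C : {set {set V * V}}) :=
  [set e in C | (e \in slicing M V1) && (#|e| == 2) && (e \subset Q)].
End Defs.

(** A quadrilateral of the slicing is the cell of a tetrahedron split 2+2 by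
    the partition, i.e. the product of two pairs {x, y} x {a, b}.  Every face
    of C^x has first coordinate x, so every edge it shares with the
    quadrilateral lies in the fiber over x, which has at most two points, and
    hence equals that fiber; symmetrically for C_a. *)
From mathcomp Require Import all_boot.
From mathcomp Require Import zify.

Set Implicit Arguments. Unset Strict Implicit. Unset Printing Implicit Defensive.

Lemma card_pairs_in_le1 (T : finType) (S : {set T}) (E : {set {set T}}) :
  #|S| <= 2 -> {in E, forall e : {set T}, e \subset S /\ #|e| = 2} -> #|E| <= 1.
Proof.
move=> cardS sub_E; rewrite -(cards1 S); apply: subset_leq_card.
apply/subsetP=> e /sub_E [eS ce]; rewrite in_set1 eqEcard eS ce.
by apply: leq_trans cardS _.
Qed.

Lemma card_setX_fst_fiber (T1 T2 : finType) (A : {set T1}) (B : {set T2}) x :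
  #|[set p in setX A B | p.1 == x]| <= #|B|.
Proof.
apply: (leq_trans _ (leq_imset_card (pair x) B)); apply: subset_leq_card.
apply/subsetP=> -[p1 p2]; rewrite !inE /= => /andP [/andP [_ p2B] /eqP ->].
exact: imset_f.
Qed.

Lemma card_setX_snd_fiber (T1 T2 : finType) (A : {set T1}) (B : {set T2}) a :
  #|[set p in setX A B | p.2 == a]| <= #|A|.
Proof.
apply: (leq_trans _ (leq_imset_card (pair^~ a) A)); apply: subset_leq_card.
apply/subsetP=> -[p1 p2]; rewrite !inE /= => /andP [/andP [p1A _] /eqP ->].
exact: (imset_f (pair^~ a)).
Qed.

Section Slicing.
Variables (V : finType) (M : {set {set V}}) (V1 : {set V}).

Lemma cellE (s : {set V}) : cell V1 s = setX (s :&: V1) (s :\: V1).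
Proof. by apply/setP=> p; rewrite !inE. Qed.

Lemma quadrilateral_cell_parts (s : {set V}) :
  #|s| <= 4 -> #|cell V1 s| = 4 -> #|s :&: V1| = 2 /\ #|s :\: V1| = 2.
Proof.
rewrite cellE cardsX -(cardsID V1 s).
move: #|s :&: V1| #|s :\: V1| => m n; nia.
Qed.

Lemma trace_up_fst x G p : G \in trace_up M V1 x -> p \in G -> p.1 = x.
Proof.
rewrite inE => /andP [_ /existsP [F /andP [CxF GF]]] /(subsetP GF) pF.
by apply/eqP; move: CxF; rewrite !inE => /orP [] /and3P [_ _ /forall_inP]; apply.
Qed.

Lemma trace_down_snd a G p : G \in trace_down M V1 a -> p \in G -> p.2 = a.
Proof.
rewrite inE => /andP [_ /existsP [F /andP [CaF GF]]] /(subsetP GF) pF.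
by apply/eqP; move: CaF; rewrite !inE => /orP [] /andP [_ /andP [_ /forall_inP]]; apply.
Qed.

Lemma shared_edgesP (Q : {set V * V}) (C : {set {set V * V}}) (P : pred (V * V)) :
  (forall G p, G \in C -> p \in G -> P p) ->
  {in shared_edges M V1 Q C, forall e : {set V * V}, e \subset [set p in Q | P p] /\ #|e| = 2}.
Proof.
move=> CP e; rewrite !inE => /andP [Ce /andP [/andP [_ /eqP ce] eQ]].
split=> //; apply/subsetP=> p pe; rewrite inE (subsetP eQ _ pe).
exact: CP pe.
Qed.

End Slicing.

Theorem lemma3p6 (V : finType) (M : {set {set V}}) (V1 : {set V})
  (Q : {set V * V}) (x a : V) :
  comb_3_pseudomanifold M ->
  V1 != set0 -> ~: V1 != set0 ->
  Q \in slicing M V1 -> #|Q| = 4 ->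
  x \in V1 -> a \in ~: V1 ->
  #|shared_edges M V1 Q (trace_up M V1 x)| <= 1 /\
  #|shared_edges M V1 Q (trace_down M V1 a)| <= 1.
Proof.
move=> [_ [[_ [dimM _]] _]] _ _ /imsetP [s]; rewrite inE => /andP [sM _] ->.
move=> cardQ _ _.
have [cardI cardD] := quadrilateral_cell_parts (dimM s sM) cardQ.
rewrite cellE; split.
- apply: (card_pairs_in_le1 _ (shared_edgesP (P := fun p => p.1 == x) _)).
    by rewrite -cardD card_setX_fst_fiber.
  by move=> G p CxG /(trace_up_fst CxG) ->.
- apply: (card_pairs_in_le1 _ (shared_edgesP (P := fun p => p.2 == a) _)).
    by rewrite -cardI card_setX_snd_fiber.
  by move=> G p CaG /(trace_down_snd CaG) ->.
Qed.
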